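(* Let $G$ be a layered group acting on the binary tree. Then $G$ is saturated.
   Context: The binary tree is $\mathcal T=X^*$ with $X=\{0,1\}$; $W$ is its isometry group. For $v\in X^*$ and $g\in W$, $v*g$ is the isometry acting as $g$ on the subtree $v\mathcal T$ (i.e. $(vw)^{v*g}=vw^g$) and fixing other vertices, and $g@v$ is the state of $g$ at $v$, i.e. $(vw)^g=v^g w^{g@v}$. $G\le W$ is level-transitive if it is transitive on $X^n$ for all $n$, and layered if it is level-transitive and $x*G\le G$ for all $x\in X$. $G$ is saturated if for every $n\in\mathbb N$ it contains a characteristic subgroup $H_n$ fixing every vertex of $X^n$ and such that $\{h@v:h\in H_n\}$ is level-transitive for every $v\in X^n$. *)

(* Binary tree T = X^* with X = bool, vertices
   are sequences of booleans; isometries are level-preserving, prefix-preserving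
   bijections of the vertex set, acting on the right: v^g = g v. *)
From mathcomp Require Import all_boot.
Set Implicit Arguments. Unset Strict Implicit. Unset Printing Implicit Defensive.

Definition vertex := seq bool.
Definition tmap := vertex -> vertex.

Definition is_isom (g : tmap) : Prop :=
  [/\ (forall v, size (g v) = size v),
      (forall v n, g (take n v) = take n (g v)) &
      bijective g].

(* right action: v^(g h) = (v^g)^h *)
Definition tmul (g h : tmap) : tmap := fun v => h (g v).
Definition tid : tmap := id.

Definition subgroup_W (G : tmap -> Prop) : Prop :=
  [/\ (forall g, G g -> is_isom g),
      G tid,
      (forall g h, G g -> G h -> G (tmul g h)) &
      (forall g, G g -> exists2 h, G h & tmul g h = tid /\ tmul h g = tid)].

Definition subgroup_of (H G : tmap -> Prop) : Prop :=
  [/\ (forall h, H h -> G h),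
      H tid,
      (forall g h, H g -> H h -> H (tmul g h)) &
      (forall g, H g -> exists2 h, H h & tmul g h = tid /\ tmul h g = tid)].

Definition group_aut (G : tmap -> Prop) (phi : tmap -> tmap) : Prop :=
  [/\ (forall g, G g -> G (phi g)),
      (forall g h, G g -> G h -> phi g = phi h -> g = h),
      (forall h, G h -> exists2 g, G g & phi g = h) &
      (forall g h, G g -> G h -> phi (tmul g h) = tmul (phi g) (phi h))].

Definition characteristic (H G : tmap -> Prop) : Prop :=
  subgroup_of H G /\
  forall phi, group_aut G phi -> forall g, G g -> (H (phi g) <-> H g).

Definition vsec (v : vertex) (g : tmap) : tmap :=
  fun u => if v == take (size v) u then v ++ g (drop (size v) u) else u.

(* g @ v : the state (section) of g at v: (v w)^g = v^g w^(g@v) *)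
Definition state (g : tmap) (v : vertex) : tmap :=
  fun w => drop (size v) (g (v ++ w)).

Definition level_transitive (G : tmap -> Prop) : Prop :=
  forall (n : nat) (u w : vertex), size u = n -> size w = n ->
    exists2 g, G g & g u = w.

Definition layered (G : tmap -> Prop) : Prop :=
  level_transitive G /\ forall (x : bool) g, G g -> G (vsec [:: x] g).

Definition saturated (G : tmap -> Prop) : Prop :=
  forall n : nat, exists H : tmap -> Prop,
    [/\ characteristic H G,
        (forall h v, H h -> size v = n -> h v = v) &
        (forall v, size v = n -> level_transitive (fun f => exists2 h, H h & f = state h v))].

(* The subgroup H_n generated by the 2^n-th powers of elements of G is verbal,
   hence characteristic.  Every isometry g satisfies g^(2^n) = 1 on level n: if
   f fixes level n it sends p b to p b or p (~~ b), so f^2 fixes level n+1.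
   Layeredness yields c in G permuting level n as a single 2^n-cycle.  For v on
   level n and k in G, the element s = (v*k) c meets the subtree vT only once
   along the c-orbit of v, so the state at v of s^(2^n) c^(-2^n) is k.  Hence
   the states of H_n at v contain G, which is level-transitive. *)

From mathcomp Require Import all_boot.
From Stdlib Require Import FunctionalExtensionality.
Set Implicit Arguments. Unset Strict Implicit. Unset Printing Implicit Defensive.

(* Weaker than [is_isom]: injectivity passes to states directly, and the
   counting arguments need nothing more. *)
Definition tree_emb (f : tmap) : Prop :=
  [/\ (forall v, size (f v) = size v),
      (forall v n, f (take n v) = take n (f v)) & injective f].

Lemma isom_tree_emb g : is_isom g -> tree_emb g.
Proof. by case=> size_g take_g /bij_inj inj_g. Qed.

Lemma tree_emb_id : tree_emb tid.
Proof. by split. Qed.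

Lemma tree_emb_mul f g : tree_emb f -> tree_emb g -> tree_emb (tmul f g).
Proof.
case=> f1 f2 f3 [g1 g2 g3]; split; rewrite /tmul.
- by move=> v; rewrite g1 f1.
- by move=> v n; rewrite f2 g2.
- by move=> x y /g3 /f3.
Qed.

Lemma tree_emb_iter k f : tree_emb f -> tree_emb (iter k f).
Proof.
by move=> hf; elim: k => [|k IH]; [exact: tree_emb_id | exact: tree_emb_mul IH hf].
Qed.

Lemma tree_emb_cat f v w : tree_emb f -> f (v ++ w) = f v ++ state f v w.
Proof.
case=> _ take_f _; rewrite /state.
have -> : f v = take (size v) (f (v ++ w)) by rewrite -take_f take_size_cat.
by rewrite cat_take_drop.
Qed.

Lemma tree_emb_state f v : tree_emb f -> tree_emb (state f v).
Proof.
move=> hf; have [size_f take_f inj_f] := hf; split; rewrite /state.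
- by move=> w; rewrite size_drop size_f size_cat addKn.
- move=> w n.
  have -> : v ++ take n w = take (n + size v) (v ++ w).
    by rewrite take_cat ltnNge leq_addl /= addnK.
  by rewrite take_f take_drop.
- move=> x y eq_xy.
  have : f (v ++ x) = f (v ++ y).
    by rewrite !(tree_emb_cat _ _ hf); congr (_ ++ _).
  by move/inj_f/eqP; rewrite eqseq_cat // eqxx => /eqP.
Qed.

Lemma tree_emb_level1 f : tree_emb f -> exists c, forall b, f [:: b] = [:: c (+) b].
Proof.
case=> size_f _ inj_f.
have letter b : exists c, f [:: b] = [:: c].
  by move: (size_f [:: b]); case: (f [:: b]) => [|c [|]] //; exists c.
have [c f0] := letter false; have [d f1] := letter true.
exists c => -[]; last by rewrite f0 addbF.
rewrite f1 addbT; congr [:: _].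
by case: c d f0 f1 => -[] f0 f1 //; move: (etrans f0 (esym f1)) => /inj_f.
Qed.

Lemma tree_emb_rcons f p : tree_emb f ->
  exists c, forall b, f (rcons p b) = rcons (f p) (c (+) b).
Proof.
move=> hf; have [c Ec] := tree_emb_level1 (tree_emb_state p hf).
by exists c => b; rewrite -!cats1 tree_emb_cat // Ec.
Qed.

Lemma tree_emb_sqr_fix_level f n : tree_emb f -> (forall p, size p = n -> f p = p) ->
  forall q, size q = n.+1 -> f (f q) = q.
Proof.
move=> hf f_fix; case/lastP => [|p b] //; rewrite size_rcons => -[/f_fix fp].
by have [c Ec] := tree_emb_rcons p hf; rewrite Ec fp Ec fp addKb.
Qed.

Lemma iter_exp2_fix_level f n q : tree_emb f -> size q = n -> iter (2 ^ n) f q = q.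
Proof.
move=> hf; elim: n q => [|n IH] q size_q.
  by case: q size_q => // _; case: hf => size_f _ _; apply/size0nil/size_f.
rewrite expnS iterM.
exact: (tree_emb_sqr_fix_level (tree_emb_iter _ hf) IH).
Qed.

Lemma vsec_cat v g w : vsec v g (v ++ w) = v ++ g w.
Proof. by rewrite /vsec take_size_cat // drop_size_cat // eqxx. Qed.

Lemma vsec_out v g u : v != take (size v) u -> vsec v g u = u.
Proof. by rewrite /vsec => /negbTE ->. Qed.

Lemma vsec_nil g : vsec [::] g = g.
Proof. by apply: functional_extensionality => u; rewrite /vsec take0 drop0. Qed.

Lemma vsec_cons x v g : vsec (x :: v) g = vsec [:: x] (vsec v g).
Proof.
apply: functional_extensionality => -[|y u] //.
rewrite /vsec /= drop0 take0 !eqseq_cons eqxx andbT.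
by case: eqP => [->|] //=; case: ifP.
Qed.

Lemma layered_vsec G v g : layered G -> G g -> G (vsec v g).
Proof.
case=> _ G_vsec1 Gg; elim: v => [|x v IH]; first by rewrite vsec_nil.
by rewrite vsec_cons; apply: G_vsec1.
Qed.

Lemma iter_cancel (T : Type) (f g : T -> T) k :
  cancel f g -> cancel (iter k f) (iter k g).
Proof. by move=> fK; elim: k => [|k IH] x //; rewrite iterSr iterS fK IH. Qed.

Lemma iter_mulV a b k : tmul a b = tid -> tmul (iter k a) (iter k b) = tid.
Proof.
move=> abK; apply: functional_extensionality; apply: iter_cancel => x.
exact: (congr1 (fun f => f x) abK).
Qed.

Section GroupFacts.

Variable G : tmap -> Prop.
Hypothesis subG : subgroup_W G.

Lemma subgroup_iter g k : G g -> G (iter k g).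
Proof.
case: subG => _ G1 GM _ Gg; elim: k => [|k IH] //; exact: GM IH Gg.
Qed.

Lemma aut1 phi : group_aut G phi -> phi tid = tid.
Proof.
case: subG => _ G1 _ GV [phiG _ _ phiM].
have idem : tmul (phi tid) (phi tid) = phi tid by rewrite -phiM.
have [p' _ [pp' _]] := GV _ (phiG _ G1).
transitivity (tmul (tmul (phi tid) (phi tid)) p'); last by rewrite idem.
by change (phi tid = tmul (phi tid) (tmul (phi tid) p')); rewrite pp'.
Qed.

Lemma aut_iter phi a k : group_aut G phi -> G a -> phi (iter k a) = iter k (phi a).
Proof.
move=> phiA Ga; have [_ _ _ phiM] := phiA.
elim: k => [|k IH]; first exact: aut1.
by rewrite -[iter k.+1 a]/(tmul (iter k a) a) phiM ?IH //; exact: subgroup_iter.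
Qed.

End GroupFacts.

Section PowerSubgroup.

Variables (G : tmap -> Prop) (N : nat).
Hypothesis subG : subgroup_W G.

Inductive power_subgroup : tmap -> Prop :=
| power_subgroup1 : power_subgroup tid
| power_subgroupM g x : G g -> power_subgroup x -> power_subgroup (tmul (iter N g) x).

Lemma power_subgroup_iter g : G g -> power_subgroup (iter N g).
Proof. by move=> Gg; exact: power_subgroupM Gg power_subgroup1. Qed.

Lemma power_subgroup_sub x : power_subgroup x -> G x.
Proof.
case: subG => _ G1 GM _.
by elim=> [|g y Gg _ Gy] //; apply: GM Gy; exact: subgroup_iter.
Qed.

Lemma power_subgroup_mul x y :
  power_subgroup x -> power_subgroup y -> power_subgroup (tmul x y).
Proof. by move=> Hx Hy; elim: Hx => [|g z Gg _ IH] //; exact: (power_subgroupM Gg IH). Qed.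

Lemma power_subgroup_inv y : power_subgroup y ->
  exists2 z, power_subgroup z & tmul y z = tid /\ tmul z y = tid.
Proof.
case: subG => _ _ _ GV.
elim=> [|a x Ga _ [x' Hx' [xx' x'x]]]; first by exists tid => //; exact: power_subgroup1.
have [a' Ga' [aa' a'a]] := GV _ Ga.
exists (tmul x' (iter N a')).
  exact: power_subgroup_mul Hx' (power_subgroup_iter Ga').
split.
- change (tmul (iter N a) (tmul (tmul x x') (iter N a')) = tid).
  by rewrite xx'; exact: iter_mulV.
- change (tmul x' (tmul (tmul (iter N a') (iter N a)) x) = tid).
  by rewrite iter_mulV.
Qed.

Lemma aut_power_subgroup phi x : group_aut G phi ->
  power_subgroup x -> power_subgroup (phi x).
Proof.
move=> phiA; have [phiG _ _ phiM] := phiA.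
elim=> [|a y Ga Hy IH]; first by rewrite (aut1 subG phiA); exact: power_subgroup1.
rewrite phiM ?(aut_iter subG _ phiA Ga); last exact: power_subgroup_sub.
  exact: power_subgroupM (phiG _ Ga) IH.
exact: subgroup_iter.
Qed.

Lemma power_subgroup_aut_image phi y : group_aut G phi ->
  power_subgroup y -> exists2 x, power_subgroup x & phi x = y.
Proof.
move=> phiA; have [_ _ phi_onto phiM] := phiA.
elim=> [|a y' Ga _ [x Hx <-]].
  by exists tid; [exact: power_subgroup1 | exact: (aut1 subG phiA)].
have [b Gb <-] := phi_onto _ Ga.
exists (tmul (iter N b) x); first exact: (power_subgroupM Gb Hx).
rewrite phiM ?(aut_iter subG _ phiA Gb) //; last exact: power_subgroup_sub.
exact: subgroup_iter.
Qed.

Lemma power_subgroup_char : characteristic power_subgroup G.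
Proof.
split.
  split; [exact: power_subgroup_sub | exact: power_subgroup1
         | exact: power_subgroup_mul | exact: power_subgroup_inv].
move=> phi phiA g Gg; split; last exact: aut_power_subgroup.
have [_ phi_inj _ _] := phiA.
move=> /(power_subgroup_aut_image phiA) [x Hx /phi_inj <-] //.
exact: power_subgroup_sub.
Qed.

End PowerSubgroup.

Lemma power_subgroup_fix_level G n h v : subgroup_W G ->
  power_subgroup G (2 ^ n) h -> size v = n -> h v = v.
Proof.
case=> isoG _ _ _ Hh size_v; elim: Hh => [|g x Gg _ IH] //.
by rewrite /tmul (iter_exp2_fix_level (isom_tree_emb (isoG _ Gg)) size_v).
Qed.

Definition level_cycle (f : tmap) (n : nat) : Prop :=
  forall q k, size q = n -> 0 < k < 2 ^ n -> iter k f q != q.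

Lemma level_cycle_swap f a b n :
  (forall p, f (false :: p) = true :: a p) ->
  (forall z, f (true :: z) = false :: b z) ->
  (forall z, size (b z) = size z) ->
  level_cycle (tmul a b) n -> level_cycle f n.+1.
Proof.
move=> f_false f_true size_b ab_cycle.
have iter_double j p : iter j.*2 f (false :: p) = false :: iter j (tmul a b) p.
  by elim: j p => [|j IH] p //; rewrite doubleS /= IH f_false f_true.
have iter_head k c z : exists z', iter k f (c :: z) = (odd k (+) c) :: z'.
  elim: k => [|k [z' IH]]; first by exists z.
  by rewrite iterS IH /= addNb; case: (odd k (+) c); [rewrite f_true | rewrite f_false]; eexists.
have even_false j p : size p = n -> 0 < j < 2 ^ n -> iter j.*2 f (false :: p) != false :: p.
  by move=> size_p j_range; rewrite iter_double eqseq_cons eqxx; exact: ab_cycle.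
move=> [|c p] k //= [size_p] /andP[k_gt0 k_lt].
case k_odd: (odd k).
  by have [z' ->] := iter_head k c p; rewrite k_odd eqseq_cons; case: c.
have k_half : k = (k./2).*2 by rewrite -[in LHS](odd_double_half k) k_odd.
have j_range : 0 < k./2 < 2 ^ n.
  by move: k_gt0 k_lt; rewrite {1 2}k_half expnS mul2n double_gt0 ltn_double => -> ->.
rewrite k_half; case: c; last exact: even_false.
apply: contra (even_false _ (b p) _ j_range); last by rewrite size_b.
by move=> /eqP fix_q; rewrite -f_true -iterSr iterS fix_q.
Qed.

(* Induction on n needs the arbitrary right factor r: the square of the element
   built for level n+1 acts on the subtree 0T as e times a product of states. *)
Lemma layered_level_cycle G n r : subgroup_W G -> layered G -> tree_emb r ->
  exists2 g, G g & level_cycle (tmul g r) n.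
Proof.
move=> subG layG; have [isoG G1 GM _] := subG.
elim: n r => [|n IH] r r_emb.
  by exists tid => // q [|k] _; rewrite expn0 // ltnS ltn0 andbF.
have [cr r1] := tree_emb_level1 r_emb.
have [t Gt t_false] := layG.1 1 [:: false] [:: ~~ cr] erefl erefl.
pose u := tmul t r.
have u_emb : tree_emb u := tree_emb_mul (isom_tree_emb (isoG _ Gt)) r_emb.
have u_cons b z : u (b :: z) = ~~ b :: state u [:: b] z.
  have [cu u1] := tree_emb_level1 u_emb.
  have cu_true : cu = true.
    by move: (u1 false); rewrite /u /tmul t_false r1 addbN addbb addbF => -[].
  by rewrite -cat1s tree_emb_cat // u1 cu_true.
have [e Ge e_cycle] := IH _ (tree_emb_mul (tree_emb_state [:: false] u_emb)
                                         (tree_emb_state [:: true] u_emb)).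
exists (tmul (vsec [:: false] e) t); first by apply: GM Gt; exact: layG.2.
apply: (@level_cycle_swap _ (tmul e (state u [:: false])) (state u [:: true])) => //.
- by move=> p; rewrite /tmul (vsec_cat [:: false]); exact: u_cons.
- by move=> z; rewrite /tmul vsec_out //; exact: u_cons.
- by move=> z; case: (tree_emb_state [:: true] u_emb).
Qed.

Lemma iter_vsec_level_cycle c k v u :
  tree_emb c -> level_cycle c (size v) ->
  iter (2 ^ size v) (tmul (vsec v k) c) (v ++ u) = iter (2 ^ size v) c (v ++ k u).
Proof.
move=> c_emb c_cycle; pose s := tmul (vsec v k) c.
suff iter_s j : j < 2 ^ size v -> iter j.+1 s (v ++ u) = iter j.+1 c (v ++ k u).
  by rewrite -(prednK (expn_gt0 2 (size v))) iter_s // prednK ?expn_gt0.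
elim: j => [|j IH] j_lt; first by rewrite /= /s /tmul vsec_cat.
have [_ take_c _] := tree_emb_iter j.+1 c_emb.
rewrite iterS IH 1?ltnW // /s /tmul vsec_out // -take_c take_size_cat // eq_sym.
exact: c_cycle.
Qed.

Lemma power_subgroup_states G v k : subgroup_W G -> layered G -> G k ->
  exists2 h, power_subgroup G (2 ^ size v) h & state h v = k.
Proof.
move=> subG layG Gk; have [isoG _ GM GV] := subG.
have [c Gc c_cycle] := layered_level_cycle (size v) subG layG tree_emb_id.
have [c' Gc' [cc' _]] := GV _ Gc.
pose s := tmul (vsec v k) c.
have Gs : G s by apply: GM Gc; exact: layered_vsec.
exists (tmul (iter (2 ^ size v) s) (iter (2 ^ size v) c')).
  exact: power_subgroupM Gs (power_subgroup_iter _ Gc').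
have cK : cancel (iter (2 ^ size v) c) (iter (2 ^ size v) c').
  by apply: iter_cancel => x; exact: (congr1 (fun f => f x) cc').
apply: functional_extensionality => u.
rewrite /state /tmul iter_vsec_level_cycle ?cK ?drop_size_cat //.
exact: isom_tree_emb (isoG _ Gc).
Qed.

Theorem lemma3p8 (G : tmap -> Prop) :
  subgroup_W G -> layered G -> saturated G.
Proof.
move=> subG layG n; exists (power_subgroup G (2 ^ n)); split.
- exact: power_subgroup_char.
- by move=> h v; exact: power_subgroup_fix_level.
move=> v <- m u w size_u size_w.
have [k Gk <-] := layG.1 m u w size_u size_w.
have [h Hh state_h] := power_subgroup_states v subG layG Gk.
by exists k => //; exists h.
Qed.
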